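(* Consider the patient model in the context and let $z_t:=[x_t\ u_t^\top\ d_t^\top]^\top$. With $\bar\Gamma:=(C_x^2+2)I_{2M+1}$, where $C_x:=\frac{\bar b+\bar c+\bar w}{1-\bar a}$, we have $\mathbf P\big[\sum_{t=1}^Tz_tz_t^\top\not\preceq T\bar\Gamma\big]=0$, i.e. $\sum_{t=1}^Tz_tz_t^\top\preceq T\bar\Gamma$ almost surely.
   Context: Patient model: $M\geq1$ treatments; $\mathcal U:=\{v\in\{0,1\}^M:\|v\|_0\leq1\}$. State $x_t\in\mathbb R$ evolves as $x_{t+1}=ax_t+b^\top u_t+c^\top d_t+w_t$, with actions $u_t\in\mathcal U$ and adherence $d_t\in\mathcal U$, $d^i_t\mid x_t,u^i_t\sim\mathrm{Bernoulli}(u^i_t\sigma(x_t+\mu_i))$, $\sigma$ the sigmoid. Parameters: $a\in[0,\bar a]$, known $\bar a\in(0,1)$, $\|b\|_\infty\leq\bar b$, $\|c\|_\infty\leq\bar c$, $\mu\in[-\bar\mu,\bar\mu]^M$. $x_t,u_t,d_t$ fully observed. Noise $w_t$ i.i.d., zero-symmetric, $\sigma_s^2$-subgaussian, $|w_t|\leq\bar w$ ($\bar w>0$), log-concave density, known variance $\sigma_w^2>0$; $x_1$ distributed as $w_t$. $\preceq$ is the Loewner order. *)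

From HB Require Import structures.
From mathcomp Require Import all_boot all_order all_algebra.
From mathcomp Require Import all_classical all_reals all_analysis.
Set Implicit Arguments. Unset Strict Implicit. Unset Printing Implicit Defensive.
Import Order.TTheory GRing.Theory Num.Theory.
Local Open Scope classical_set_scope.
Local Open Scope ring_scope.

Section Defs.
Context (R : realType).

Definition loewner_le (n : nat) (A B : 'M[R]_n) : Prop :=
  forall v : 'cV[R]_n, (v^T *m A *m v) 0 0 <= (v^T *m B *m v) 0 0.

Definition in_U (M : nat) (v : 'cV[R]_M) : Prop :=
  (forall i, v i ord0 = 0 \/ v i ord0 = 1) /\ (#|[pred i | v i ord0 != 0%R]| <= 1)%N.

Definition sigmoid (y : R) : R := (1 + expR (- y))^-1.

Definition log_concave (f : R -> R) : Prop :=
  forall (y z th : R), 0 <= th <= 1 ->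
    f y `^ (1 - th) * f z `^ th <= f ((1 - th) * y + th * z).

End Defs.

Section Model.
Context (dT : measure_display) (Omega : measurableType dT) (R : realType)
  (P : probability Omega R).

Definition mutually_independent (X : nat -> Omega -> R) : Prop :=
  forall (s : seq nat) (B : nat -> set R), uniq s -> all (fun t => 0 < t)%N s ->
    (forall t, measurable (B t)) ->
    P (\big[setI/setT]_(t <- s) (X t @^-1` B t)) =
    (\prod_(t <- s) P (X t @^-1` B t))%E.

Definition has_logconcave_density (X : Omega -> R) : Prop :=
  exists f : R -> R, measurable_fun setT f /\ (forall y, 0 <= f y) /\
    log_concave f /\
    forall B : set R, measurable B ->
      P (X @^-1` B) = (\int[@lebesgue_measure R]_(y in B) (f y)%:E)%E.

Definition subgaussian (s2 : R) (X : Omega -> R) : Prop :=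
  forall lam : R,
    (\int[P]_w (expR (lam * X w))%:E <= (expR (lam ^+ 2 * s2 / 2))%:E)%E.

(* All standing assumptions of the patient model (time starts at t = 1). *)
Definition patient_model (M : nat) (abar bbar cbar mubar wbar sigma_s sigma_w : R)
  (a : R) (b c mu : 'cV[R]_M)
  (x : nat -> Omega -> R) (u d : nat -> Omega -> 'cV[R]_M)
  (w : nat -> Omega -> R) : Prop :=
  [/\
      [/\ 0 < abar < 1, 0 <= a <= abar,
          (forall i, `|b i ord0| <= bbar), (forall i, `|c i ord0| <= cbar)
        & (forall i, - mubar <= mu i ord0 <= mubar)],
      (forall t, measurable_fun setT (x t) /\ measurable_fun setT (w t) /\
         (forall i, measurable_fun setT (fun o => u t o i ord0)) /\
         (forall i, measurable_fun setT (fun o => d t o i ord0))),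
      [/\ (forall t o, (0 < t)%N -> in_U (u t o) /\ in_U (d t o)),
      (forall t o, (0 < t)%N ->
         x t.+1 o = a * x t o + (b^T *m u t o) 0 0 + (c^T *m d t o) 0 0 + w t o) &
      (* adherence: d^i_t | x_t, u^i_t ~ Bernoulli(u^i_t sigmoid(x_t + mu_i)) *)
      (forall t i, (0 < t)%N ->
         (forall A : set R, measurable A ->
            P [set o | A (x t o) /\ u t o i ord0 = 1 /\ d t o i ord0 = 1] =
            (\int[P]_(o in [set o | A (x t o) /\ u t o i ord0 = 1%R])
                (sigmoid (x t o + mu i ord0))%:E)%E) /\
         P [set o | u t o i ord0 = 0 /\ d t o i ord0 = 1] = 0%E)],
      [/\ mutually_independent w,
          (forall t (B : set R), (0 < t)%N -> measurable B ->
             P (w t @^-1` B) = P (w 1%N @^-1` B) /\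
             P (w t @^-1` B) = P ((fun o => - w t o) @^-1` B)),
          (forall t, (0 < t)%N -> subgaussian (sigma_s ^+ 2) (w t)),
          0 < wbar /\ (forall t, (0 < t)%N -> {ae P, forall o, `|w t o| <= wbar}) &
          (forall t, (0 < t)%N -> has_logconcave_density (w t) /\
             'V_P[w t] = (sigma_w ^+ 2)%:E)] &
      0 < sigma_w ^+ 2 /\
      (forall B : set R, measurable B -> P (x 1%N @^-1` B) = P (w 1%N @^-1` B))].

End Model.

Definition zvec (R : realType) (M : nat) (xt : R) (ut dt : 'cV[R]_M)
  : 'cV[R]_(1 + M + M) := col_mx (col_mx (xt%:M : 'M[R]_1) ut) dt.

Definition Cx (R : realType) (abar bbar cbar wbar : R) : R :=
  (bbar + cbar + wbar) / (1 - abar).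

From HB Require Import structures.
From mathcomp Require Import all_boot all_order all_algebra.
From mathcomp Require Import all_classical all_reals all_analysis.
From mathcomp Require Import ring lra.

Set Implicit Arguments.
Unset Strict Implicit.
Unset Printing Implicit Defensive.
Import Order.TTheory GRing.Theory Num.Theory.
Local Open Scope classical_set_scope.
Local Open Scope ring_scope.

(* Almost surely the state never leaves [-C_x, C_x]: |x_1| <= wbar <= C_x, and
   since |b^T u| <= bbar and |c^T d| <= cbar for u, d in U, the dynamics give
   |x_(t+1)| <= abar C_x + bbar + cbar + wbar = C_x.  Hence
   |z_t|^2 <= C_x^2 + 1 + 1, and by Cauchy-Schwarz z_t z_t^T is dominated by
   |z_t|^2 I in the Loewner order; summing over t gives the claim. *)

Section cauchy_schwarz.
Variable R : realDomainType.

Lemma dotmx_sum n (a b : 'cV[R]_n) : (a^T *m b) 0 0 = \sum_i a i 0 * b i 0.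
Proof. by rewrite mxE; apply: eq_bigr => i _; rewrite mxE. Qed.

Lemma dotmx_self n (a : 'cV[R]_n) : (a^T *m a) 0 0 = \sum_i a i 0 ^+ 2.
Proof. by rewrite dotmx_sum; apply: eq_bigr => i _; rewrite expr2. Qed.

Lemma dotmx_self_ge0 n (a : 'cV[R]_n) : 0 <= (a^T *m a) 0 0.
Proof. by rewrite dotmx_self sumr_ge0 // => i _; rewrite sqr_ge0. Qed.

Lemma cauchy_schwarz_sum n (f g : 'I_n -> R) :
  (\sum_i f i * g i) ^+ 2 <= (\sum_i f i ^+ 2) * (\sum_i g i ^+ 2).
Proof.
have lagrange : \sum_i \sum_j (f i * g j - f j * g i) ^+ 2 =
    2 * ((\sum_i f i ^+ 2) * (\sum_i g i ^+ 2) - (\sum_i f i * g i) ^+ 2).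
  have -> : \sum_i \sum_j (f i * g j - f j * g i) ^+ 2 =
      \sum_i \sum_j (f i ^+ 2 * g j ^+ 2) + \sum_i \sum_j (f j ^+ 2 * g i ^+ 2)
      - 2 * \sum_i \sum_j (f i * g i * (f j * g j)).
    rewrite mulr_sumr -big_split -sumrB /=; apply: eq_bigr => i _.
    by rewrite mulr_sumr -big_split -sumrB /=; apply: eq_bigr => j _; ring.
  rewrite (exchange_big _ _ _ _ _ (fun i j => f j ^+ 2 * g i ^+ 2)) /=.
  by rewrite -!big_distrlr /= expr2; ring.
have : 0 <= \sum_i \sum_j (f i * g j - f j * g i) ^+ 2.
  by apply: sumr_ge0 => i _; apply: sumr_ge0 => j _; exact: sqr_ge0.
by rewrite lagrange pmulr_rge0 // subr_ge0.
Qed.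

Lemma cauchy_schwarz_dotmx n (a b : 'cV[R]_n) :
  ((a^T *m b) 0 0) ^+ 2 <= (a^T *m a) 0 0 * (b^T *m b) 0 0.
Proof. by rewrite dotmx_sum !dotmx_self; apply: cauchy_schwarz_sum. Qed.

End cauchy_schwarz.

Section loewner.
Variable R : realType.

Lemma loewner_le_sum n (I : Type) (r : seq I) (P : pred I) (A B : I -> 'M[R]_n) :
  (forall i, P i -> loewner_le (A i) (B i)) ->
  loewner_le (\sum_(i <- r | P i) A i) (\sum_(i <- r | P i) B i).
Proof.
move=> leAB v; rewrite !mulmx_sumr !mulmx_suml !summxE.
by apply: ler_sum => i /leAB.
Qed.

Lemma loewner_le_sum_nat n (m k : nat) (A B : nat -> 'M[R]_n) :
  (forall i, (m <= i < k)%N -> loewner_le (A i) (B i)) ->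
  loewner_le (\sum_(m <= i < k) A i) (\sum_(m <= i < k) B i).
Proof. by move=> leAB; rewrite !big_nat; apply: loewner_le_sum. Qed.

Lemma loewner_le_outer n (z : 'cV[R]_n) (k : R) :
  (z^T *m z) 0 0 <= k -> loewner_le (z *m z^T) k%:M.
Proof.
move=> zk v.
have -> : (v^T *m (z *m z^T) *m v) 0 0 = ((v^T *m z) 0 0) ^+ 2.
  rewrite !mulmxA -mulmxA [LHS]mxE big_ord1 expr2; congr (_ * _).
  by rewrite -[v]trmxK -trmx_mul mxE trmxK.
rewrite mul_mx_scalar -scalemxAl [leRHS]mxE mulrC.
apply: le_trans (cauchy_schwarz_dotmx v z) _.
by rewrite ler_wpM2l ?dotmx_self_ge0.
Qed.

End loewner.

Section action_set.
Variable R : realType.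

Lemma in_U_sum_abs M (v : 'cV[R]_M) : in_U v -> \sum_i `|v i 0| <= 1.
Proof.
move=> [v01 supp1].
have -> : \sum_i `|v i 0| = (#|[pred i | v i 0 != 0]|)%:R.
  rewrite -sum1_card natr_sum [RHS]big_mkcond; apply: eq_bigr => i _ /=.
  by rewrite inE; case: (v01 i) => ->; rewrite ?eqxx ?normr0 ?normr1 ?oner_eq0.
by rewrite -[leRHS]/(1%:R) ler_nat.
Qed.

Lemma in_U_dotmx_self M (v : 'cV[R]_M) : in_U v -> (v^T *m v) 0 0 <= 1.
Proof.
move=> vU; rewrite dotmx_self; apply: le_trans _ (in_U_sum_abs vU).
by apply: ler_sum => i _; case: (vU.1 i) => ->; rewrite ?normr0 ?normr1 ?expr0n ?expr1n.
Qed.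

Lemma in_U_dotmx_le M (v b : 'cV[R]_M) (k : R) :
  in_U v -> 0 <= k -> (forall i, `|b i ord0| <= k) -> `|(b^T *m v) 0 0| <= k.
Proof.
move=> vU k0 bk; rewrite dotmx_sum; apply: le_trans; first exact: ler_norm_sum.
apply: (@le_trans _ _ (\sum_i k * `|v i 0|)).
  by apply: ler_sum => i _; rewrite normrM ler_wpM2r.
by rewrite -mulr_sumr -[leRHS]mulr1 ler_wpM2l // in_U_sum_abs.
Qed.

Lemma zvec_dotmx_self M (xt : R) (ut dt : 'cV[R]_M) :
  ((zvec xt ut dt)^T *m zvec xt ut dt) 0 0 =
  xt ^+ 2 + (ut^T *m ut) 0 0 + (dt^T *m dt) 0 0.
Proof.
rewrite /zvec !tr_col_mx !mul_row_col !mxE.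
by rewrite big_ord1 !mxE eqxx mulr1n expr2.
Qed.

Lemma zvec_dotmx_self_le M (xt k : R) (ut dt : 'cV[R]_M) :
  `|xt| <= k -> in_U ut -> in_U dt ->
  ((zvec xt ut dt)^T *m zvec xt ut dt) 0 0 <= k ^+ 2 + 2.
Proof.
move=> xk uU dU; rewrite zvec_dotmx_self -addrA lerD //.
  by rewrite -real_normK ?num_real // lerXn2r // ?nnegrE // (le_trans _ xk).
by rewrite [2]/(1 + 1) lerD // in_U_dotmx_self.
Qed.

End action_set.

Section state_bound.
Variable R : realType.

Lemma Cx_fixed_point (abar bbar cbar wbar : R) : abar < 1 ->
  abar * Cx abar bbar cbar wbar + (bbar + cbar + wbar) = Cx abar bbar cbar wbar.
Proof. by move=> abar1; rewrite /Cx; field; rewrite subr_eq0 gt_eqF. Qed.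

Lemma noise_bound_le_Cx (abar bbar cbar wbar : R) :
  0 <= abar -> abar < 1 -> 0 <= bbar -> 0 <= cbar -> 0 <= wbar ->
  wbar <= Cx abar bbar cbar wbar.
Proof.
move=> abar0 abar1 bbar0 cbar0 wbar0.
by rewrite /Cx ler_pdivlMr ?subr_gt0 //; nra.
Qed.

Lemma state_step_abs_le M (a abar bbar cbar wbar k xt wt : R) (b c ut dt : 'cV[R]_M) :
  0 <= a <= abar -> 0 <= bbar -> 0 <= cbar ->
  (forall i, `|b i ord0| <= bbar) -> (forall i, `|c i ord0| <= cbar) ->
  in_U ut -> in_U dt -> `|xt| <= k -> `|wt| <= wbar ->
  `|a * xt + (b^T *m ut) 0 0 + (c^T *m dt) 0 0 + wt|
    <= abar * k + (bbar + cbar + wbar).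
Proof.
move=> /andP[a0 aabar] bbar0 cbar0 b_le c_le uU dU xk wwbar.
have axk : `|a * xt| <= abar * k.
  rewrite normrM ger0_norm //; apply: le_trans (ler_wpM2l a0 xk) _.
  by rewrite ler_wpM2r // (le_trans _ xk).
have bu := in_U_dotmx_le uU bbar0 b_le.
have cd := in_U_dotmx_le dU cbar0 c_le.
by rewrite !addrA; do 3!(apply: le_trans (ler_normD _ _) _; apply: lerD => //).
Qed.

End state_bound.

Section almost_sure.
Context d (T : measurableType d) (R : realType) (mu : {measure set T -> \bar R}).

Lemma ae_abs_le_same_law (X Y : T -> R) (r : R) :
  measurable_fun setT X -> measurable_fun setT Y ->
  (forall B, measurable B -> mu (X @^-1` B) = mu (Y @^-1` B)) ->
  {ae mu, forall o, `|Y o| <= r} -> {ae mu, forall o, `|X o| <= r}.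
Proof.
move=> mX mY XY [N [mN N0 YN]].
pose B : set R := setT `&` (Num.norm @^-1` `]r, +oo[%classic).
have mB : measurable B.
  by apply: measurable_realfun.normr_measurable => //; exact: measurable_itv.
have inB y : B y <-> r < `|y| by rewrite /B /= in_itv /= andbT; split => [[]|].
have mYB : measurable (Y @^-1` B) by rewrite -[_ @^-1` _]setTI; exact: mY.
exists (X @^-1` B); split.
- by rewrite -[_ @^-1` _]setTI; exact: mX.
- rewrite XY //; apply: subset_measure0 mYB mN _ N0 => o /inB rY.
  by apply: YN => /=; rewrite leNgt rY.
- by move=> o /= /negP; rewrite -ltNge => /inB.
Qed.

End almost_sure.

Lemma patient_state_abs_le_Cx (dT : measure_display) (Omega : measurableType dT)
  (R : realType) (P : probability Omega R) (M : nat)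
  (abar bbar cbar mubar wbar sigma_s sigma_w a : R) (b c mu : 'cV[R]_M)
  (x : nat -> Omega -> R) (u d : nat -> Omega -> 'cV[R]_M)
  (w : nat -> Omega -> R) :
  (1 <= M)%N ->
  patient_model P abar bbar cbar mubar wbar sigma_s sigma_w a b c mu x u d w ->
  {ae P, forall o t, (0 < t)%N -> `|x t o| <= Cx abar bbar cbar wbar}.
Proof.
move=> M_gt0 [[abar01 a01 b_le c_le _] meas [inU dyn _]
  [_ _ _ [wbar_gt0 w_le] _] [_ x1_law]].
have bbar0 : 0 <= bbar := le_trans (normr_ge0 _) (b_le (Ordinal M_gt0)).
have cbar0 : 0 <= cbar := le_trans (normr_ge0 _) (c_le (Ordinal M_gt0)).
have /andP[/ltW abar0 abar1] := abar01.
have wbar_le_C := noise_bound_le_Cx abar0 abar1 bbar0 cbar0 (ltW wbar_gt0).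
have x1_le : {ae P, forall o, `|x 1%N o| <= wbar}.
  exact: ae_abs_le_same_law (meas 1%N).1 (meas 1%N).2.1 x1_law (w_le 1%N isT).
have w_le_all : {ae P, forall o t, (0 < t)%N -> `|w t o| <= wbar}.
  apply: ae_foralln => -[|t]; first exact: aeW.
  by apply: filterS (w_le t.+1 isT) => o + _.
apply: filterS2 x1_le w_le_all => o x1o wo.
elim=> // -[_ _|t IH _]; first exact: le_trans x1o wbar_le_C.
have [uU dU] := inU t.+1 o isT.
rewrite dyn // -(Cx_fixed_point bbar cbar wbar abar1).
exact: state_step_abs_le a01 bbar0 cbar0 b_le c_le uU dU (IH isT) (wo t.+1 isT).
Qed.

Theorem proposition3 (dT : measure_display) (Omega : measurableType dT)
  (R : realType) (P : probability Omega R) (M : nat)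
  (abar bbar cbar mubar wbar sigma_s sigma_w a : R) (b c mu : 'cV[R]_M)
  (x : nat -> Omega -> R) (u d : nat -> Omega -> 'cV[R]_M)
  (w : nat -> Omega -> R) :
  (1 <= M)%N ->
  patient_model P abar bbar cbar mubar wbar sigma_s sigma_w a b c mu x u d w ->
  forall Tn : nat,
  {ae P, forall o,
    loewner_le
      (\sum_(1 <= t < Tn.+1) zvec (x t o) (u t o) (d t o) *m (zvec (x t o) (u t o) (d t o))^T)
      (Tn%:R *: ((Cx abar bbar cbar wbar ^+ 2 + 2)%:M : 'M[R]_(1 + M + M)))}.
Proof.
move=> M_gt0 model Tn; have [_ _ [inU _ _] _ _] := model.
apply: filterS (patient_state_abs_le_Cx M_gt0 model) => o x_le.
have sum_const (K : 'M[R]_(1 + M + M)) : Tn%:R *: K = \sum_(1 <= t < Tn.+1) K.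
  by rewrite sumr_const_nat subSS subn0 scaler_nat.
rewrite sum_const.
apply: loewner_le_sum_nat => t /andP[t_gt0 _].
have [uU dU] := inU t o t_gt0.
exact: loewner_le_outer (zvec_dotmx_self_le (x_le t t_gt0) uU dU).
Qed.
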